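(* If a complete edge-colored graph $G=(V,E_1,\dots,E_k)$ contains a rainbow triangle, then $G$ is not a complete edge-colored permutation graph.
   Context: A complete $k$-edge-colored graph $G=(V,E_1,\dots,E_k)$ is the complete graph on a finite set $V$ whose edges are partitioned into $k$ nonempty color classes $E_i$; $G_{|i}=(V,E_i)$. A rainbow triangle is a set of three vertices whose three edges have pairwise distinct colors. A labeling is a bijection $\ell:V\to\{1,\dots,|V|\}$. A graph $(V,E)$ with labeling $\ell$ is a simple permutation graph of a permutation $\pi$ of $\{1,\dots,|V|\}$ if for all $u,v$ with $\ell(u)>\ell(v)$: $\{u,v\}\in E$ iff $\pi^{-1}(\ell(u))<\pi^{-1}(\ell(v))$. $G$ is a complete edge-colored permutation graph if there exist a labeling $\ell$ and permutations $\pi_1,\dots,\pi_k$ with $(G_{|i},\ell)$ a simple permutation graph of $\pi_i$ for all $i$. *)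

From mathcomp Require Import all_boot all_fingroup.
Set Implicit Arguments. Unset Strict Implicit. Unset Printing Implicit Defensive.

(* A complete k-edge-colored graph on the finite vertex set V is given by a
   coloring [col : V -> V -> 'I_k] of the edges {u,v} (u <> v) of the complete
   graph: [col u v] is the color of edge {u,v}.  Values [col u u] are irrelevant. *)
Definition complete_edge_colored (V : finType) (k : nat) (col : V -> V -> 'I_k) :=
  (forall u v, u != v -> col u v = col v u) /\
  (forall i : 'I_k, exists u v, u != v /\ col u v = i).

Definition color_class (V : finType) (k : nat) (col : V -> V -> 'I_k) (i : 'I_k)
  : rel V := fun u v => (u != v) && (col u v == i).

Definition has_rainbow_triangle (V : finType) (k : nat) (col : V -> V -> 'I_k) :=
  exists a b c : V, [/\ a != b, b != c & a != c] /\
    [/\ col a b != col b c, col b c != col a c & col a b != col a c].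

(* (V,E) with labeling ell (values 0..n-1 instead of 1..n) is a simple
   permutation graph of pi. *)
Definition simple_perm_graph (V : finType) (n : nat) (E : rel V)
  (ell : V -> 'I_n) (pi : {perm 'I_n}) :=
  forall u v : V, ell v < ell u ->
    (E u v <-> (pi^-1)%g (ell u) < (pi^-1)%g (ell v)).

Definition complete_edge_colored_perm_graph (V : finType) (k : nat)
  (col : V -> V -> 'I_k) :=
  exists ell : V -> 'I_#|V|, bijective ell /\
  exists pis : 'I_k -> {perm 'I_#|V|},
    forall i : 'I_k, simple_perm_graph (color_class col i) ell (pis i).

From mathcomp Require Import all_boot all_fingroup.

Set Implicit Arguments. Unset Strict Implicit. Unset Printing Implicit Defensive.

(* Order the rainbow triangle by labels, x < y < z, and let i be the color of
   the long edge {x,z}.  In the permutation graph of color i, an edge between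
   two vertices means that pi_i^-1 reverses their labels.  The pair {x,z} is
   reversed, but neither {x,y} nor {y,z} (their colors differ from i), which is
   impossible since pi_i^-1 x <= pi_i^-1 y <= pi_i^-1 z would follow. *)

Lemma simple_perm_graph_edge_split (V : finType) (n : nat) (E : rel V)
    (ell : V -> 'I_n) (pi : {perm 'I_n}) (x y z : V) :
  simple_perm_graph E ell pi -> ell x < ell y -> ell y < ell z ->
  E z x -> E y x || E z y.
Proof.
move=> Epi lt_xy lt_yz Ezx; apply/norP => -[Nyx Nzy].
have [/(_ Ezx) lt_zx _] := Epi z x (ltn_trans lt_xy lt_yz).
have le_xy : (pi^-1)%g (ell x) <= (pi^-1)%g (ell y).
  by rewrite leqNgt; apply: contra Nyx => /(Epi y x lt_xy).2.
have le_yz : (pi^-1)%g (ell y) <= (pi^-1)%g (ell z).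
  by rewrite leqNgt; apply: contra Nzy => /(Epi z y lt_yz).2.
by move: (leq_trans le_xy le_yz); rewrite leqNgt lt_zx.
Qed.

Lemma sorted_triple (T : Type) (f : T -> nat) (P : T -> T -> T -> Prop) :
    (forall a b c, P a b c -> P b a c) -> (forall a b c, P a b c -> P a c b) ->
  forall a b c, P a b c -> [/\ f a != f b, f b != f c & f a != f c] ->
  exists x y z, [/\ P x y z, f x < f y & f y < f z].
Proof.
move=> P12 P23 a b c Pabc [ab bc ac].
wlog lt_ab : a b Pabc ab bc ac / f a < f b => [W|].
  case: (ltngtP (f a) (f b)) => [|lt_ba|eq_ab]; first exact: W.
  - by apply: (W b a) => //; [exact: P12 | rewrite eq_sym].
  - by rewrite eq_ab eqxx in ab.
case: (ltngtP (f b) (f c)) => [lt_bc|lt_cb|eq_bc]; first by exists a, b, c.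
- case: (ltngtP (f a) (f c)) => [lt_ac|lt_ca|eq_ac].
  + by exists a, c, b; split => //; apply: P23.
  + by exists c, a, b; split => //; apply/P12/P23.
  + by rewrite eq_ac eqxx in ac.
- by rewrite eq_bc eqxx in bc.
Qed.

Section ColoredPermGraph.

Variables (V : finType) (k : nat) (col : V -> V -> 'I_k).
Hypothesis col_sym : forall u v, u != v -> col u v = col v u.

Definition rainbow_triangle (a b c : V) : Prop :=
  [/\ a != b, b != c & a != c] /\
  [/\ col a b != col b c, col b c != col a c & col a b != col a c].

Lemma rainbow_triangle_swap12 a b c :
  rainbow_triangle a b c -> rainbow_triangle b a c.
Proof.
move=> [[ab bc ac] [c1 c2 c3]]; rewrite /rainbow_triangle -(col_sym ab).
by split; split=> //; rewrite eq_sym.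
Qed.

Lemma rainbow_triangle_swap23 a b c :
  rainbow_triangle a b c -> rainbow_triangle a c b.
Proof.
move=> [[ab bc ac] [c1 c2 c3]]; rewrite /rainbow_triangle -(col_sym bc).
by split; split=> //; rewrite eq_sym.
Qed.

Lemma colored_perm_graph_long_edge (n : nat) (ell : V -> 'I_n)
    (pis : 'I_k -> {perm 'I_n}) (x y z : V) :
  (forall i, simple_perm_graph (color_class col i) ell (pis i)) ->
  ell x < ell y -> ell y < ell z -> col x z = col x y \/ col x z = col y z.
Proof.
move=> perm_pis lt_xy lt_yz.
have xz : x != z by apply: contraTneq (ltn_trans lt_xy lt_yz) => ->; rewrite ltnn.
have xy : x != y by apply: contraTneq lt_xy => ->; rewrite ltnn.
have yz : y != z by apply: contraTneq lt_yz => ->; rewrite ltnn.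
have Ezx : color_class col (col x z) z x.
  by rewrite /color_class (eq_sym z) xz /= (col_sym xz).
case/orP: (simple_perm_graph_edge_split (perm_pis _) lt_xy lt_yz Ezx).
- by case/andP => _ /eqP <-; left; apply: col_sym; rewrite eq_sym.
- by case/andP => _ /eqP <-; right; apply: col_sym; rewrite eq_sym.
Qed.

End ColoredPermGraph.

Theorem lemma3p10 (V : finType) (k : nat) (col : V -> V -> 'I_k) :
  complete_edge_colored col ->
  has_rainbow_triangle col ->
  ~ complete_edge_colored_perm_graph col.
Proof.
move=> [col_sym _] [a [b [c abc]]] [ell [ell_bij [pis perm_pis]]].
have ell_neq u v : u != v -> ell u != ell v :> nat.
  by apply: contraNneq => /val_inj /(bij_inj ell_bij) ->.
have [[ab bc ac] _] := abc.
have [x [y [z [[_ [_ c2 c3]] lt_xy lt_yz]]]] :=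
  sorted_triple (f := fun v => nat_of_ord (ell v))
    (rainbow_triangle_swap12 col_sym) (rainbow_triangle_swap23 col_sym) abc
    (And3 (ell_neq _ _ ab) (ell_neq _ _ bc) (ell_neq _ _ ac)).
by case: (colored_perm_graph_long_edge col_sym perm_pis lt_xy lt_yz) => eq_col;
  [move: c3 | move: c2]; rewrite eq_col eqxx.
Qed.
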